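(* Let $G$ be a second countable locally compact abelian group, let $\varLambda\subseteq\varGamma\subseteq G$ be uniformly discrete point sets, and let $\mathcal{A}=(A_n)_n$ be a van Hove sequence such that: (a) $\varLambda\cap A_n$ is eventually nonempty; (b) the counting autocorrelation $\gamma_{\mathrm{count},\varLambda}$ of $\varLambda$ exists with respect to $\mathcal{A}$; (c) $\lim_{n\to\infty}\frac{\mathrm{card}(\varLambda\cap A_n)}{\mathrm{card}(\varGamma\cap A_n)}=1$. Then the counting autocorrelation $\gamma_{\mathrm{count},\varGamma}$ of $\varGamma$ exists with respect to $\mathcal{A}$ and $\gamma_{\mathrm{count},\varGamma}=\gamma_{\mathrm{count},\varLambda}$.
   Context: Uniformly discrete: there is a nonempty open $U$ such that each translate $t+U$ contains at most one point of the set. A van Hove sequence is a sequence of compact sets $A_n$ of positive Haar measure with $\mathrm{vol}(\partial^K A_n)/\mathrm{vol}(A_n)\to0$ for all compact $K$, where $\partial^K A=((A+K)\setminus A^\circ)\cup((\overline{G\setminus A}-K)\cap A)$. For finite $F$, $\gamma_F=\frac{1}{\mathrm{card}(F)}\sum_{x,y\in F}\delta_{x-y}$ if $F\ne\emptyset$, $\gamma_\emptyset=0$; the counting autocorrelation of $X$ is the vague limit of $\gamma_{X\cap A_n}$. *)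

From HB Require Import structures.
From mathcomp Require Import all_boot all_order all_algebra.
From mathcomp Require Import all_classical all_reals all_analysis.
From mathcomp Require Import finmap.
From mathcomp.real_closed Require Import complex.
Set Implicit Arguments. Unset Strict Implicit. Unset Printing Implicit Defensive.
Import Order.TTheory GRing.Theory Num.Theory.
Import numFieldTopology.Exports numFieldNormedType.Exports.
Local Open Scope classical_set_scope.
Local Open Scope ring_scope.

(** Conventions: a "second countable locally compact abelian group" is a
    topologicalZmodType (abelian group with continuous + and -) which is
    Hausdorff, locally compact and second countable. *)
Definition LCA_second_countable (G : topologicalZmodType) : Prop :=
  [/\ hausdorff_space G, locally_compact [set: G] & @second_countable G].

Section Defs.
Context (G : topologicalZmodType).

Definition msum (A K : set G) : set G := [set a + k | a in A & k in K].
Definition mdiff (B K : set G) : set G := [set b - k | b in B & k in K].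

Definition kbdry (K A : set G) : set G :=
  (msum A K `\` interior A) `|` (mdiff (closure (~` A)) K `&` A).

Definition translate (t : G) (U : set G) : set G := [set t + u | u in U].

Definition uniformly_discrete (X : set G) : Prop :=
  exists U : set G, [/\ open U, U !=set0 &
    forall t x y, X x -> X y -> translate t U x -> translate t U y -> x = y].

(** G, pointed by 0 (needed to build the Borel measurable space) *)
Definition pointedG : Type := G.
HB.instance Definition _ := Choice.on pointedG.
HB.instance Definition _ := isPointed.Build pointedG (0 : G).
End Defs.

Definition borelT (G : topologicalZmodType) :=
  g_sigma_algebraType (@open G : set (set (pointedG G))).

(** the complex numbers over R, as a numFieldType (norm = modulus), so that
    they carry their usual (metric) topology *)
Definition Cplx (R : realType) : numFieldType := (R[i] : numFieldType).

Section Defs2.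
Context (R : realType) (G : topologicalZmodType).

(** mu is a Haar measure on the Borel sets of G: a nonzero-on-opens,
    translation invariant Borel measure, finite on compact sets.
    (In a second countable LCH space every such measure is regular,
    so this is exactly a Haar measure.) *)
Definition haar_measure (mu : {measure set (borelT G) -> \bar R}) : Prop :=
  [/\ forall (t : G) (A : set G), measurable (A : set (borelT G)) ->
        mu (translate t A : set (borelT G)) = mu (A : set (borelT G)),
      forall K : set G, compact K -> (mu (K : set (borelT G)) < +oo)%E &
      forall U : set G, open U -> U !=set0 -> (0 < mu (U : set (borelT G)))%E].

Definition van_Hove (mu : {measure set (borelT G) -> \bar R}) (A : nat -> set G)
  : Prop :=
  (forall n, compact (A n) /\ (0 < mu (A n : set (borelT G)))%E) /\
  (forall K : set G, compact K ->
     (fine (mu (kbdry K (A n) : set (borelT G))) /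
      fine (mu (A n : set (borelT G))))
       @[n --> \oo] --> (0 : R)).

(** number of elements of a (finite) set; here only applied to sets of the
    form X ∩ A_n, which are finite (X uniformly discrete, A_n compact) *)
Definition card_set (F : set G) : nat := #|` fset_set F|.

Definition Cc (f : G -> Cplx R) : Prop :=
  continuous f /\ compact (closure [set x | f x != 0]).

Definition gammaF (F : set G) (f : G -> Cplx R) : Cplx R :=
  if card_set F == 0%N then 0
  else (card_set F)%:R^-1 * \sum_(x <- fset_set F) \sum_(y <- fset_set F) f (x - y).

(** gamma is the vague limit of the measures gamma_{X ∩ A_n}, i.e. the
    counting autocorrelation of X w.r.t. A (measures being identified with
    the linear functionals on C_c(G) they define). *)
Definition is_count_autocorr (X : set G) (A : nat -> set G)
  (gamma : (G -> Cplx R) -> Cplx R) : Prop :=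
  forall f, Cc f -> gammaF (X `&` A n) f @[n --> \oo] --> gamma f.
End Defs2.

From HB Require Import structures.
From mathcomp Require Import all_boot all_order all_algebra.
From mathcomp Require Import all_classical all_reals all_analysis.
From mathcomp Require Import finmap.
From mathcomp.real_closed Require Import complex.
Import Order.TTheory GRing.Theory Num.Theory.
Import numFieldTopology.Exports numFieldNormedType.Exports.
Set Implicit Arguments.
Unset Strict Implicit.
Unset Printing Implicit Defensive.

Local Open Scope classical_set_scope.
Local Open Scope ring_scope.
Local Open Scope complex_scope.

(* Since Gamma is uniformly discrete, a translate of the
   compact set supp f \/ -supp f contains at most N points of Gamma, so every
   row and column sum  \sum_(y in E) |f (x - y)|  over a finite E of Gamma is
   bounded by B := N sup|f|, uniformly in x and E.  With E_n = Gamma /\ A_n and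
   F_n = Lambda /\ A_n, the double sums of f (x - y) over E_n x E_n and over
   F_n x F_n thus differ by at most 2B card (E_n \ F_n), i.e.
     |gamma_(E_n) f - r_n gamma_(F_n) f| <= 2B (1 - r_n),
   where r_n = card F_n / card E_n tends to 1.  Hence gamma_(E_n) f and
   gamma_(F_n) f have the same limit. *)

(* [compact_cover] is only available for pointed spaces. *)
HB.instance Definition _ (G : topologicalZmodType) :=
  Topological.copy (pointedG G) G.

Section UniformlyDiscrete.
Context (G : topologicalZmodType).

Lemma translate_open (t : G) (U : set G) : open U -> open (translate t U).
Proof.
move=> oU.
have -> : translate t U = (fun x => x - t) @^-1` U.
  apply/seteqP; split=> x /=; first by case=> u Uu <-; rewrite addrC addKr.
  by move=> Uxt; exists (x - t) => //; rewrite addrC subrK.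
apply: open_comp => // x _.
apply: (@continuous_comp _ _ _ (fun x => (x, t)) (fun x : G * G => x.1 - x.2)).
  exact: cvg_pair cvg_id (cvg_cst _).
exact: sub_continuous.
Qed.

Lemma translateBr (t x y : G) (U : set G) :
  translate t U (y - x) -> translate (x + t) U y.
Proof. by case=> u Uu e; exists u => //; rewrite -addrA e addrC subrK. Qed.

Lemma compact_translate_cover (K U : set G) (u : G) : compact K -> open U -> U u ->
  exists ts : seq G, forall y, K y -> exists2 t, t \in ts & translate t U y.
Proof.
move=> cK oU Uu; pose O t := translate (t - u) U.
have [D _ KD] : finite_subset_cover K O K.
  move: cK; rewrite (compact_cover (pointedG G)); apply=> [t _|y Ky].
    exact: translate_open.
  by exists y => //; exists u => //; rewrite subrK.
exists [seq t - u | t <- enum_fset D] => y /KD[t tD Oty].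
by exists (t - u) => //; apply: map_f.
Qed.

Lemma separated_size_le (X U : set G) (ts s : seq G) :
  (forall t x y, X x -> X y -> translate t U x -> translate t U y -> x = y) ->
  uniq s -> (forall y, y \in s -> X y /\ exists2 t, t \in ts & translate t U y) ->
  (size s <= size ts)%N.
Proof.
move=> sepX us sXts.
pose P y := [set t | t \in ts /\ translate t U y].
have tsP y : y \in s -> xget 0 (P y) \in ts /\ translate (xget 0 (P y)) U y.
  by move=> /sXts[_ [t tts Uy]]; apply: (xgetPex 0 (P := P y)); exists t.
rewrite -(size_map (fun y => xget 0 (P y))); apply: uniq_leq_size.
  rewrite map_inj_in_uniq // => y y' ys y's e.
  have [[Xy _] [Xy' _]] := (sXts y ys, sXts y' y's).
  apply: (sepX (xget 0 (P y))) => //; first exact: (tsP y ys).2.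
  by rewrite e; exact: (tsP y' y's).2.
by move=> _ /mapP[y ys ->]; exact: (tsP y ys).1.
Qed.

Lemma uniformly_discrete_size_le (X K : set G) :
  uniformly_discrete X -> compact K ->
  exists N, forall (z : G) (s : seq G), uniq s ->
    (forall y, y \in s -> X y /\ K (y - z)) -> (size s <= N)%N.
Proof.
move=> [U [oU [u Uu] sepX]] cK.
have [ts cover_ts] := compact_translate_cover cK oU Uu.
exists (size ts) => z s us sXK.
rewrite -(size_map (fun t => z + t) ts).
apply: (separated_size_le sepX us) => y /sXK[Xy /cover_ts[t tts Ut]].
by split=> //; exists (z + t); [exact: map_f | exact: translateBr].
Qed.

Lemma uniformly_discrete_finite (X K : set G) :
  uniformly_discrete X -> compact K -> finite_set (X `&` K).
Proof.
move=> udX cK; have [N sizeN] := uniformly_discrete_size_le udX cK.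
apply: contrapT => /(infinite_set_fset N.+1)[D DXK].
apply/negP; rewrite -ltnNge; apply: (sizeN 0); first exact: fset_uniq.
by move=> y yD; rewrite subr0; apply: DXK.
Qed.

End UniformlyDiscrete.

Lemma sumr_const_seq (I : Type) (V : nmodType) (r : seq I) (x : V) :
  \sum_(i <- r) x = x *+ size r.
Proof. by rewrite big_const_seq iter_addr_0 count_predT. Qed.

Lemma sum_norm_le_sparse (T : eqType) (V : numDomainType) (P : T -> Prop)
    (N : nat) (h : T -> V) (M : V) (s : seq T) :
  (forall s', uniq s' -> (forall y, y \in s' -> P y) -> (size s' <= N)%N) ->
  uniq s -> 0 <= M -> (forall y, `|h y| <= M) ->
  (forall y, y \in s -> h y != 0 -> P y) ->
  \sum_(y <- s) `|h y| <= M *+ N.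
Proof.
move=> sizeN us M0 hM sP.
have sizeF : (size [seq y <- s | h y != 0%R] <= N)%N.
  apply: sizeN; first exact: filter_uniq.
  by move=> y; rewrite mem_filter => /andP[hy ys]; apply: sP.
rewrite (bigID (fun y => h y != 0)) /= [X in _ + X]big1; last first.
  by move=> y /negPn/eqP ->; rewrite normr0.
rewrite addr0 -big_filter; apply: le_trans (ler_wpMn2l M0 sizeF).
by rewrite -sumr_const_seq; apply: ler_sum.
Qed.

Lemma double_sum_cat_sub (T : Type) (V : numDomainType) (F D : seq T)
    (g : T -> T -> V) (B : V) :
  (forall x, \sum_(y <- F ++ D) `|g x y| <= B) ->
  (forall y, \sum_(x <- F) `|g x y| <= B) ->
  `|\sum_(x <- F ++ D) \sum_(y <- F ++ D) g x y - \sum_(x <- F) \sum_(y <- F) g x y|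
    <= (B + B) *+ size D.
Proof.
move=> rowB colB.
have splitF : \sum_(x <- F) \sum_(y <- F ++ D) g x y
    = \sum_(x <- F) \sum_(y <- F) g x y + \sum_(y <- D) \sum_(x <- F) g x y.
  by under eq_bigr do rewrite big_cat; rewrite big_split /= [X in _ + X]exchange_big.
have cancel_left (a b c : V) : a + b + c - a = b + c.
  by rewrite addrAC [a + b]addrC addrK.
rewrite big_cat /= splitF cancel_left mulrnDl.
apply: le_trans (ler_normD _ _) _.
apply: lerD; apply: le_trans (ler_norm_sum _ _ _) _;
  rewrite -sumr_const_seq; apply: ler_sum => x _;
  exact: le_trans (ler_norm_sum _ _ _) _.
Qed.

Lemma uniq_perm_cat_filter (T : eqType) (E F : seq T) :
  uniq E -> uniq F -> {subset F <= E} ->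
  perm_eq E (F ++ [seq x <- E | x \notin F]).
Proof.
move=> uE uF FE; rewrite -(perm_filterC (mem F) E) perm_cat2r.
apply: uniq_perm; [exact: filter_uniq | exact: uF |] => x.
by rewrite mem_filter andb_idr // => /FE.
Qed.

Lemma double_sum_subset_le (T : eqType) (V : numDomainType) (E F : seq T)
    (g : T -> T -> V) (B : V) :
  uniq E -> uniq F -> {subset F <= E} ->
  (forall x, \sum_(y <- E) `|g x y| <= B) ->
  (forall y, \sum_(x <- F) `|g x y| <= B) ->
  `|\sum_(x <- E) \sum_(y <- E) g x y - \sum_(x <- F) \sum_(y <- F) g x y|
    <= (B + B) *+ (size E - size F).
Proof.
move=> uE uF FE rowB colB.
have EFD := uniq_perm_cat_filter uE uF FE.
rewrite (perm_size EFD) size_cat addKn (perm_big _ EFD).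
under eq_bigr do rewrite (perm_big _ EFD).
by apply: double_sum_cat_sub colB => x; rewrite -(perm_big _ EFD).
Qed.

Lemma compact_norm_bounded (T : ptopologicalType) (K : numFieldType)
    (f : T -> K) (S : set T) :
  continuous f -> compact S -> exists2 M, 0 <= M & forall x, S x -> `|f x| <= M.
Proof.
move=> cf; rewrite compact_cover => cS.
pose O t := f @^-1` ball (f t) 1.
have [D _ SD] : finite_subset_cover S O S.
  apply: cS => [t _|x Sx]; last by exists x => //; apply: ballxx.
  by apply: open_comp => [y _|]; [exact: cf | exact: ball_open].
have M0 : 0 <= \sum_(t <- D) (`|f t| + 1).
  by apply: sumr_ge0 => t _; rewrite addr_ge0.
exists (\sum_(t <- D) (`|f t| + 1)) => // x /SD[t tD].
rewrite /O /= -ball_normE /= => ftx.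
have fxt : `|f x| <= `|f t| + 1.
  have -> : f x = f t - (f t - f x) by rewrite opprB addrC subrK.
  by apply: le_trans (ler_normB _ _) _; rewrite lerD2l ltW.
rewrite (bigD1_seq t) //= -[X in X <= _]addr0; apply: lerD => //.
by apply: sumr_ge0 => u _; rewrite addr_ge0.
Qed.

Lemma cvg0_norm_le (K : numFieldType) (T : Type) (F : set_system T) {FF : Filter F}
    (u v : T -> K) :
  (\forall x \near F, `|u x| <= v x) -> v x @[x --> F] --> 0 ->
  u x @[x --> F] --> 0.
Proof.
move=> uv /cvgr0Pnorm_le v0; apply/cvgr0Pnorm_le => e e0.
apply: filterS2 uv (v0 _ e0) => x uvx.
by rewrite ger0_norm ?(le_trans (normr_ge0 _) uvx) //; exact: le_trans.
Qed.

Lemma cvg_realC (R : realType) (u : nat -> R) (l : R) :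
  u n @[n --> \oo] --> l -> ((u n)%:C : Cplx R) @[n --> \oo] --> (l%:C : Cplx R).
Proof.
move=> ul; apply/cvgrPdist_lt => e e0.
have Ime : complex.Im e = 0 by apply: ger0_Im; apply: ltW.
have Ree : 0 < complex.Re e by move: e0; rewrite ltcE => /andP[].
move/cvgrPdist_lt: ul => /(_ _ Ree); apply: filterS => n.
by rewrite -rmorphB normc_def /= expr0n /= addr0 sqrtr_sqr ltcE /= Ime eqxx.
Qed.

Section CompactlySupported.
Context (R : realType) (G : topologicalZmodType).

Lemma Cc_norm_bounded (f : G -> Cplx R) :
  Cc f -> exists2 M, 0 <= M & forall x, `|f x| <= M.
Proof.
case=> cf cS; have [M M0 fM] := @compact_norm_bounded (pointedG G) _ f _ cf cS.
exists M => // x; have [->|fx0] := eqVneq (f x) 0; first by rewrite normr0.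
by apply: fM; apply: subset_closure.
Qed.

Lemma Cc_sum_bounded (X : set G) (f : G -> Cplx R) :
  uniformly_discrete X -> Cc f ->
  exists B, forall s, uniq s -> (forall y, y \in s -> X y) -> forall z,
    \sum_(y <- s) `|f (z - y)| <= B /\ \sum_(y <- s) `|f (y - z)| <= B.
Proof.
move=> udX Cf; have [M M0 fM] := Cc_norm_bounded Cf.
case: Cf => _; set S := closure _ => cS.
have cK : compact (S `|` [set - x | x in S]).
  apply: compactU => //; apply: continuous_compact => //.
  by apply: continuous_subspaceT => x; exact: opp_continuous.
have [N sizeN] := uniformly_discrete_size_le udX cK.
have S_supp x : f x != 0 -> S x by move=> fx; apply: subset_closure.
exists (M *+ N) => s us sX z.
split; apply: (sum_norm_le_sparse (sizeN z)) => // y ys /S_supp Sy;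
  split; try exact: sX.
- by right; exists (z - y); rewrite ?opprB.
- by left.
Qed.

End CompactlySupported.

Section CountingAutocorrelation.
Context (R : realType) (G : topologicalZmodType).

Definition card_ratio (L X : set G) : R := (card_set L)%:R / (card_set X)%:R.

Lemma gammaFE (F : set G) (f : G -> Cplx R) :
  gammaF F f =
    (card_set F)%:R^-1 * \sum_(x <- fset_set F) \sum_(y <- fset_set F) f (x - y).
Proof. by rewrite /gammaF; case: eqP => // ->; rewrite invr0 mul0r. Qed.

Lemma card_set_mul_gammaF (F : set G) (f : G -> Cplx R) :
  (card_set F)%:R * gammaF F f =
    \sum_(x <- fset_set F) \sum_(y <- fset_set F) f (x - y).
Proof.
rewrite gammaFE; have [/[dup] F0 ->|F0] := eqVneq (card_set F) 0%N.
  by rewrite mul0r; move/cardfs0_eq: F0 => ->; rewrite big_seq_fset0.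
by rewrite mulVKf // pnatr_eq0.
Qed.

Lemma gammaF_subset_le (L X : set G) (f : G -> Cplx R) (B : Cplx R) :
  finite_set X -> L `<=` X ->
  (forall s, uniq s -> (forall y, y \in s -> X y) -> forall z,
     \sum_(y <- s) `|f (z - y)| <= B /\ \sum_(y <- s) `|f (y - z)| <= B) ->
  `|gammaF X f - (card_ratio L X)%:C * gammaF L f|
    <= (B + B) * (1 - (card_ratio L X)%:C).
Proof.
move=> finX LX sumB; have finL : finite_set L := sub_finite_set LX finX.
have B0 : 0 <= B.
  have nilX y : y \in [::] -> X y by [].
  by have [] := sumB [::] erefl nilX 0; rewrite big_nil.
set E := enum_fset (fset_set X); set F := enum_fset (fset_set L).
have FE : {subset F <= E} by move=> y; rewrite !in_fset_set // !in_setE => /LX.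
have EX y : y \in E -> X y by rewrite in_fset_set // in_setE.
have FX y : y \in F -> X y by move/FE; exact: EX.
have sumEF := double_sum_subset_le (g := fun x y => f (x - y))
  (fset_uniq _) (fset_uniq _) FE
  (fun x => (sumB _ (fset_uniq _) EX x).1) (fun y => (sumB _ (fset_uniq _) FX y).2).
rewrite /card_ratio rmorphM fmorphV !rmorph_nat mulrAC card_set_mul_gammaF gammaFE.
rewrite /card_set -/E -/F [X in _ - X]mulrC -mulrBr normrM normfV normr_nat.
apply: le_trans (ler_wpM2l _ sumEF) _; first by rewrite invr_ge0 ler0n.
have FEsize : (size F <= size E)%N := uniq_leq_size (fset_uniq _) FE.
rewrite -[(B + B) *+ _]mulr_natr natrB // mulrCA ler_wpM2l ?addr_ge0 //.
rewrite mulrBr [_^-1 * (size F)%:R]mulrC lerD2r.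
by have [->|E0] := eqVneq (size E) 0%N; rewrite ?invr0 ?mul0r ?mulVf ?pnatr_eq0.
Qed.

Lemma gammaF_ratio_error_cvg0 (L X : nat -> set G) (f : G -> Cplx R) (B : Cplx R) :
  (forall n, finite_set (X n)) -> (forall n, L n `<=` X n) ->
  (forall n s, uniq s -> (forall y, y \in s -> X n y) -> forall z,
     \sum_(y <- s) `|f (z - y)| <= B /\ \sum_(y <- s) `|f (y - z)| <= B) ->
  (card_ratio (L n) (X n))%:C @[n --> \oo] --> (1 : Cplx R) ->
  (gammaF (X n) f - (card_ratio (L n) (X n))%:C * gammaF (L n) f)
    @[n --> \oo] --> (0 : Cplx R).
Proof.
move=> finX LX sumB r1; pose r n : Cplx R := (card_ratio (L n) (X n))%:C.
have {}r1 : r n @[n --> \oo] --> (1 : Cplx R) := r1.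
apply: (cvg0_norm_le (v := fun n => (B + B) * (1 - r n))).
  by apply: nearW => n; exact: gammaF_subset_le (finX n) (LX n) (sumB n).
have r0 : (1 - r n) @[n --> \oo] --> (0 : Cplx R).
  by rewrite -(subrr (1 : Cplx R)); exact: (cvgB (cvg_cst _) r1).
by rewrite -(mulr0 (B + B)); exact: (@cvgM _ _ _ _ (fun=> B + B) _ _ _ (cvg_cst _) r0).
Qed.

End CountingAutocorrelation.

Theorem lemma3p19 (R : realType) (G : topologicalZmodType)
  (mu : {measure set (borelT G) -> \bar R})
  (Lambda Gamma : set G) (A : nat -> set G) :
  LCA_second_countable G ->
  haar_measure mu ->
  uniformly_discrete Lambda -> uniformly_discrete Gamma ->
  Lambda `<=` Gamma ->
  van_Hove mu A ->
  (\forall n \near \oo, (Lambda `&` A n) !=set0) ->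
  forall gammaL : (G -> Cplx R) -> Cplx R,
  is_count_autocorr Lambda A gammaL ->
  ((card_set (Lambda `&` A n))%:R / (card_set (Gamma `&` A n))%:R : R)
     @[n --> \oo] --> (1 : R) ->
  is_count_autocorr Gamma A gammaL.
Proof.
move=> _ _ _ udGamma LG [cA _] _ gammaL autoL ratio1 f Cf.
have [B sumB] := Cc_sum_bounded udGamma Cf.
pose r n : Cplx R := (card_ratio R (Lambda `&` A n) (Gamma `&` A n))%:C.
have r1 : r n @[n --> \oo] --> (1 : Cplx R).
  by rewrite -(rmorph1 (real_complex R)); exact: cvg_realC ratio1.
have err0 := gammaF_ratio_error_cvg0 (L := fun n => Lambda `&` A n) (f := f)
  (fun n => uniformly_discrete_finite udGamma (cA n).1)
  (fun n => setSI (C := A n) LG)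
  (fun n s us sG => sumB s us (fun y ys => (sG y ys).1)) r1.
have -> : (fun n => gammaF (Gamma `&` A n) f) = (fun n =>
    gammaF (Gamma `&` A n) f - r n * gammaF (Lambda `&` A n) f
    + r n * gammaF (Lambda `&` A n) f).
  by apply/funext => n; rewrite subrK.
have lim := cvgD err0 (cvgM r1 (autoL f Cf)).
by rewrite add0r mul1r in lim; apply: lim.
Qed.
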